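(* In the setting below, $$\mathrm{Syl}_B(J)\cdot\begin{pmatrix}\mathfrak{M}_B(\mathbf{y})\\ \mathfrak{R}_B(\mathbf{y})\end{pmatrix}=[\mathrm{Tr}(b_ib_j)]_{i,j=1}^N.$$
   Context: Setting: $\mathbb{K}$ algebraically closed, $\mathbf{x}=(x_1,\ldots,x_m)$, $f_1,\ldots,f_s\in\mathbb{K}[\mathbf{x}]$ of degrees $d_i$, $\mathcal{I}=\langle f_1,\ldots,f_s\rangle$, $\mathcal{A}=\mathbb{K}[\mathbf{x}]/\mathcal{I}$ finite dimensional of dimension $N$. $\mathbb{K}[\mathbf{x}]_k$ = polynomials of total degree $\le k$; $\langle f_1,\ldots,f_s\rangle_d:=\{\sum_i q_if_i:\deg q_i\le d-d_i\}$; $\mathrm{Mon}_\le(\Delta)$ = monomials of degree $\le\Delta$. $B=[b_1,\ldots,b_N]$ are monomials $b_i=\mathbf{x}^{\alpha_i}$ of degree $\le D$ whose classes form a basis of $\mathcal{A}$, and $\Delta\ge2D$ is such that their classes also form a basis of $\mathbb{K}[\mathbf{x}]_\Delta/(\langle f_1,\ldots,f_s\rangle_{\Delta+1}\cap\mathbb{K}[\mathbf{x}]_\Delta)$. $\mathrm{Mac}_\Delta(\mathbf{f})$ is a matrix whose rows are the coefficient vectors (w.r.t. $\mathrm{Mon}_\le(\Delta)$) of a basis of $\langle f_1,\ldots,f_s\rangle_{\Delta+1}\cap\mathbb{K}[\mathbf{x}]_\Delta$, with columns indexed by $\mathrm{Mon}_\le(\Delta)$, the monomials of $B$ first. Fix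 $\mathbf{y}=(y_\alpha)_{|\alpha|\le\Delta}$ with $\mathrm{Mac}_\Delta(\mathbf{f})\mathbf{y}=0$ such that the moment matrix $\mathfrak{M}_B(\mathbf{y})=[y_{\alpha_i+\alpha_j}]_{i,j=1}^N$ is invertible. $\mathfrak{R}_B(\mathbf{y})$ is the unique matrix with rows indexed by $\mathrm{Mon}_\le(\Delta)\setminus B$ and columns by $B$ such that $\mathrm{Mac}_\Delta(\mathbf{f})\cdot\binom{\mathfrak{M}_B(\mathbf{y})}{\mathfrak{R}_B(\mathbf{y})}=0$ (rows of the stacked matrix ordered as the columns of $\mathrm{Mac}_\Delta(\mathbf{f})$). Write $\mathfrak{M}_B(\mathbf{y})^{-1}=[c_{ij}]$, $b_i^*:=\sum_{j}c_{ji}b_j$, and let $J$ be the unique element of $\mathrm{span}(b_1,\ldots,b_N)$ congruent to $\sum_i b_ib_i^*$ modulo $\mathcal{I}$ (so $\deg J\le D$). $\mathrm{Syl}_B(J)$ is the $N\times|\mathrm{Mon}_\le(\Delta)|$ matrix whose $i$-th row is the coefficient vector of the polynomial $b_iJ$ (of degree $\le 2D\le\Delta$) with respect to $\mathrm{Mon}_\le(\Delta)$, columns ordered as in $\mathrm{Mac}_\Delta(\mathbf{f})$. $\mathrm{Tr}(h)$ is the trace of the multiplication map $g\mapsto hg$ on $\mathcal{A}$. *)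

From HB Require Import structures.
From mathcomp Require Import all_boot all_order all_algebra.
From mathcomp Require Export mpoly.
Set Implicit Arguments. Unset Strict Implicit. Unset Printing Implicit Defensive.
Import Order.TTheory GRing.Theory.
Local Open Scope ring_scope.

Section Defs.
Variables (K : fieldType) (m s : nat) (f : 'I_s -> {mpoly K[m]}).

(* total degree of a polynomial (the degree of 0 is taken to be 0 here;
   it is only used for the generators f_i) *)
Definition tdeg (p : {mpoly K[m]}) : nat := (msize p).-1.

(* deg p <= k  (with deg 0 = -oo):  msize p = 1 + deg p, msize 0 = 0 *)
Definition deg_le (p : {mpoly K[m]}) (k : nat) : bool := (msize p <= k.+1)%N.

Definition in_ideal (p : {mpoly K[m]}) : Prop :=
  exists q : 'I_s -> {mpoly K[m]}, p = \sum_(i < s) q i * f i.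

(* membership in <f_1,...,f_s>_d = { sum q_i f_i : deg q_i <= d - d_i }
   (deg q_i <= d - d_i, with deg 0 = -oo, is  msize q_i <= d + 1 - d_i) *)
Definition in_ideal_deg (d : nat) (p : {mpoly K[m]}) : Prop :=
  exists q : 'I_s -> {mpoly K[m]},
    (forall i, (msize (q i) <= d.+1 - tdeg (f i))%N) /\
    p = \sum_(i < s) q i * f i.

Definition in_L (Delta : nat) (p : {mpoly K[m]}) : Prop :=
  in_ideal_deg Delta.+1 p /\ deg_le p Delta.

Definition basis_quotient (N : nat) (b : 'I_N -> {mpoly K[m]}) : Prop :=
  (forall p, exists c : 'I_N -> K, in_ideal (p - \sum_(i < N) c i *: b i)) /\
  (forall c : 'I_N -> K, in_ideal (\sum_(i < N) c i *: b i) -> forall i, c i = 0).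

Definition basis_trunc_quotient (Delta N : nat) (b : 'I_N -> {mpoly K[m]}) : Prop :=
  (forall p, deg_le p Delta ->
     exists c : 'I_N -> K, in_L Delta (p - \sum_(i < N) c i *: b i)) /\
  (forall c : 'I_N -> K, in_L Delta (\sum_(i < N) c i *: b i) -> forall i, c i = 0).

(* T is the matrix (in the basis b, row convention) of the multiplication map
   g |-> h g on A = K[x]/I : h b_k = sum_l T k l b_l  mod I *)
Definition mult_matrix (N : nat) (b : 'I_N -> {mpoly K[m]}) (h : {mpoly K[m]})
  (T : 'M[K]_N) : Prop :=
  forall k, in_ideal (h * b k - \sum_(l < N) T k l *: b l).

End Defs.

Section MacDefs.
Variables (K : fieldType) (m Delta N : nat) (alpha : 'I_N -> 'X_{1..m}).

Definition Mon := 'X_{1..m < Delta.+1}.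

Definition bmon (i : 'I_N) : {mpoly K[m]} := 'X_[alpha i].

Definition row_poly (v : Mon -> K) : {mpoly K[m]} :=
  \sum_(g : Mon) v g *: 'X_[(g : 'X_{1..m})].

Definition moment_mx (y : 'X_{1..m} -> K) : 'M[K]_N :=
  \matrix_(i, j) y (alpha i + alpha j)%MM.

(* the stacked matrix (M_B(y) ; R_B(y)), rows indexed by Mon_<=(Delta):
   the row of the monomial alpha_k is row k of M_B(y); any other monomial
   gamma gets the row gamma of R (rows of R at monomials of B are unused) *)
Definition stacked (MB : 'M[K]_N) (R : Mon -> 'I_N -> K) (g : Mon) (j : 'I_N) : K :=
  match [pick k | alpha k == (g : 'X_{1..m})] with
  | Some k => MB k j
  | None => R g j
  end.

Definition bstar (MB : 'M[K]_N) (i : 'I_N) : {mpoly K[m]} :=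
  \sum_(j < N) (invmx MB) j i *: bmon j.

Definition syl_stacked (J : {mpoly K[m]}) (MB : 'M[K]_N) (R : Mon -> 'I_N -> K)
  (i j : 'I_N) : K :=
  \sum_(g : Mon) (bmon i * J)@_(g : 'X_{1..m}) * stacked MB R g j.

End MacDefs.

From HB Require Import structures.
From mathcomp Require Import all_boot all_order all_algebra.
From mathcomp Require Import mpoly.
From mathcomp Require Import ring.
From Stdlib Require Import ClassicalEpsilon.
Import GRing.Theory.
Local Open Scope ring_scope.
Set Implicit Arguments. Unset Strict Implicit.

(** Let l be the linear form on A = K[x]/I taking the value y_(alpha_k) on
    b_k.  Since y kills the rows of the Macaulay matrix, the form
    p |-> sum_g p_g y_g on K[x]_Delta factors through the truncated quotient,
    in which B is again a basis; hence it agrees with l in degree <= Delta and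
    M_B(y) is the Gram matrix [l (b_k b_l)] of the bilinear form
    (p, q) |-> l (p q).  In the same way column j of the stacked matrix is a
    form killing the Macaulay rows that agrees with p |-> l (p b_j) on B, so
    entry (i, j) of the left-hand side is l (b_i J b_j).  On the other side the
    b_k^* are the basis dual to B for that bilinear form, so for every h,
    Tr h = sum_k l (h b_k^* b_k) = l (h J); take h = b_i b_j. *)

Section Ideal.
Variables (K : fieldType) (m s : nat) (f : 'I_s -> {mpoly K[m]}).
Implicit Types p q : {mpoly K[m]}.

Lemma ideal0 : in_ideal f 0.
Proof. by exists (fun=> 0); rewrite big1 // => i _; rewrite mul0r. Qed.

Lemma idealD p q : in_ideal f p -> in_ideal f q -> in_ideal f (p + q).
Proof.
move=> [a ->] [c ->]; exists (fun i => a i + c i).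
by rewrite -big_split; apply: eq_bigr => i _; rewrite mulrDl.
Qed.

Lemma idealMl q p : in_ideal f p -> in_ideal f (q * p).
Proof.
move=> [a ->]; exists (fun i => q * a i).
by rewrite mulr_sumr; apply: eq_bigr => i _; rewrite mulrA.
Qed.

Lemma idealMr q p : in_ideal f p -> in_ideal f (p * q).
Proof. by rewrite mulrC; apply: idealMl. Qed.

Lemma idealZ c p : in_ideal f p -> in_ideal f (c *: p).
Proof. by rewrite -mul_mpolyC; apply: idealMl. Qed.

Lemma idealB p q : in_ideal f p -> in_ideal f q -> in_ideal f (p - q).
Proof. by move=> hp /(idealZ (-1)); rewrite scaleN1r; apply: idealD. Qed.

Lemma in_L_ideal Delta p : in_L f Delta p -> in_ideal f p.
Proof. by move=> [[q [_ ->]] _]; exists q. Qed.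

End Ideal.

Section QuotientForm.
Variables (K : fieldType) (m s : nat) (f : 'I_s -> {mpoly K[m]}).
Variables (N : nat) (b : 'I_N -> {mpoly K[m]}) (HA : basis_quotient f b).
Variable w : 'I_N -> K.
Implicit Types p q : {mpoly K[m]}.

Definition acoord p : 'I_N -> K :=
  proj1_sig (constructive_indefinite_description _ (proj1 HA p)).

Lemma acoordP p : in_ideal f (p - \sum_(i < N) acoord p i *: b i).
Proof. exact: proj2_sig (constructive_indefinite_description _ (proj1 HA p)). Qed.

(* The form l of the proof idea, for arbitrary prescribed values w on B. *)
Definition aform p : K := \sum_(k < N) acoord p k * w k.

Lemma aform_coord p c :
  in_ideal f (p - \sum_(i < N) c i *: b i) -> aform p = \sum_(k < N) c k * w k.
Proof.
move=> hc; have hcoord : in_ideal f (\sum_(i < N) (c i - acoord p i) *: b i).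
  have -> : \sum_(i < N) (c i - acoord p i) *: b i
          = (p - \sum_(i < N) acoord p i *: b i) - (p - \sum_(i < N) c i *: b i).
    by rewrite (eq_bigr _ (fun i _ => scalerBl _ _ _)) sumrB; ring.
  exact: idealB (acoordP p) hc.
apply: eq_bigr => k _; congr (_ * _).
by apply/eqP; rewrite eq_sym -subr_eq0; apply/eqP/(proj2 HA _ hcoord).
Qed.

Lemma aform_eq_mod p q : in_ideal f (p - q) -> aform p = aform q.
Proof.
move=> hpq; apply: aform_coord.
by rewrite -(subrK q p) -addrA; apply: idealD hpq (acoordP q).
Qed.

Lemma aform_is_linear : linear_for *%R aform.
Proof.
move=> a p q; rewrite (@aform_coord _ (fun i => a * acoord p i + acoord q i)).
  rewrite /aform mulr_sumr -big_split; by apply: eq_bigr => i _; rewrite mulrDl mulrA.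
have -> : a *: p + q - \sum_(i < N) (a * acoord p i + acoord q i) *: b i
        = a *: (p - \sum_(i < N) acoord p i *: b i) + (q - \sum_(i < N) acoord q i *: b i).
  rewrite scalerBr scaler_sumr (eq_bigr _ (fun i _ => scalerDl _ _ _)) big_split /=.
  under [\sum_(i < N) a *: _]eq_bigr do rewrite scalerA.
  by rewrite opprD addrACA.
by apply: idealD; [apply: idealZ|]; apply: acoordP.
Qed.

HB.instance Definition _ :=
  GRing.isLinear.Build K {mpoly K[m]} K *%R aform aform_is_linear.

Lemma aform_basis k : aform (b k) = w k.
Proof.
rewrite (@aform_coord _ (fun i => (i == k)%:R)).
  by rewrite (bigD1 k) //= eqxx mul1r big1 ?addr0 // => i /negbTE ->; rewrite mul0r.
rewrite (bigD1 k) //= eqxx scale1r big1 ?addr0 ?subrr; first exact: ideal0.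
by move=> i /negbTE ->; rewrite scale0r.
Qed.

Lemma aform_mult_matrix h T q k : mult_matrix f b h T ->
  aform (h * b k * q) = \sum_(l < N) T k l * aform (b l * q).
Proof.
move=> /(_ k) /(idealMr q); rewrite mulrBl => /aform_eq_mod ->.
rewrite mulr_suml linear_sum; apply: eq_bigr => l _.
by rewrite -scalerAl linearZ.
Qed.

Lemma trace_mult_matrix h T (C : 'M[K]_N) :
  (\matrix_(k, l) aform (b k * b l)) *m C = 1%:M -> mult_matrix f b h T ->
  \tr T = aform (h * \sum_(k < N) b k * \sum_(l < N) C l k *: b l).
Proof.
move=> MC hT; rewrite mulr_sumr linear_sum; apply: eq_bigr => k _.
rewrite -[T]mulmx1 -MC mulmxA mxE mulrA mulr_sumr linear_sum.
apply: eq_bigr => l _; rewrite -scalerAr linearZ /= mulrC mxE.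
rewrite (aform_mult_matrix _ _ hT); congr (_ * _); apply: eq_bigr => n _.
by rewrite mxE.
Qed.

End QuotientForm.

Section MonomialForm.
Variables (K : fieldType) (m Delta : nat) (w : Mon m Delta -> K).
Implicit Types p q : {mpoly K[m]}.

Definition mform p : K := \sum_(g : Mon m Delta) p@_(g : 'X_{1..m}) * w g.

Lemma mform_is_linear : linear_for *%R mform.
Proof.
move=> a p q; rewrite /mform mulr_sumr -big_split; apply: eq_bigr => g _ /=.
by rewrite mcoeffD mcoeffZ mulrDl mulrA.
Qed.

HB.instance Definition _ :=
  GRing.isLinear.Build K {mpoly K[m]} K *%R mform mform_is_linear.

Lemma mformX beta (lt_beta : (mdeg beta < Delta.+1)%N) :
  mform 'X_[beta] = w (BMultinom lt_beta).
Proof.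
rewrite /mform (bigD1 (BMultinom lt_beta)) //= mcoeffX eqxx mul1r big1 ?addr0 //.
move=> g ne_g; rewrite mcoeffX.
suff /negbTE -> : beta != g by rewrite mul0r.
by apply: contra ne_g => /eqP e; apply/eqP/val_inj.
Qed.

Lemma row_poly_coeff (v : Mon m Delta -> K) (g : Mon m Delta) :
  (row_poly v)@_(g : 'X_{1..m}) = v g.
Proof.
rewrite /row_poly raddf_sum (bigD1 g) //= mcoeffZ mcoeffX eqxx mulr1.
rewrite big1 ?addr0 // => g' ne_g'; rewrite mcoeffZ mcoeffX.
suff /negbTE -> : (g' : 'X_{1..m}) != g by rewrite mulr0.
by rewrite -bmeqP.
Qed.

Lemma mform_row_poly (v : Mon m Delta -> K) :
  mform (row_poly v) = \sum_(g : Mon m Delta) v g * w g.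
Proof. by apply: eq_bigr => g _; rewrite row_poly_coeff. Qed.

End MonomialForm.

Section MacaulayKernel.
Variables (K : fieldType) (m s : nat) (f : 'I_s -> {mpoly K[m]}).
Variables (Delta r : nat) (Mac : 'I_r -> Mon m Delta -> K).
Hypothesis Mac_span : forall p, in_L f Delta p ->
  exists a : 'I_r -> K, p = \sum_(k < r) a k *: row_poly (Mac k).
Variables (N : nat) (b : 'I_N -> {mpoly K[m]}).
Hypotheses (HA : basis_quotient f b) (HT : basis_trunc_quotient f Delta b).
Variable w : Mon m Delta -> K.
Hypothesis Mac_w : forall k, \sum_(g : Mon m Delta) Mac k g * w g = 0.

Lemma mform_in_L p : in_L f Delta p -> mform w p = 0.
Proof.
move=> /Mac_span [a ->]; rewrite linear_sum big1 // => k _.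
by rewrite linearZ /= mform_row_poly Mac_w mulr0.
Qed.

Lemma mform_aformM (v : 'I_N -> K) q :
  (forall k, mform w (b k) = aform HA v (b k * q)) ->
  forall p, deg_le p Delta -> mform w p = aform HA v (p * q).
Proof.
move=> w_b p /(proj1 HT) [c hc].
have /eqP := mform_in_L hc; rewrite linearB subr_eq0 => /eqP ->.
have hpq := idealMr q (in_L_ideal hc); rewrite mulrBl mulr_suml in hpq.
rewrite (aform_eq_mod HA v hpq) !linear_sum; apply: eq_bigr => k _.
by rewrite -scalerAl !linearZ /= w_b.
Qed.

End MacaulayKernel.

Lemma deg_leX (K : fieldType) (m : nat) (beta : 'X_{1..m}) d :
  deg_le ('X_[beta] : {mpoly K[m]}) d = (mdeg beta <= d)%N.
Proof. by rewrite /deg_le msizeX. Qed.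

Lemma deg_le_lincomb (K : fieldType) (m : nat) (I : finType) (a : I -> K)
    (P : I -> {mpoly K[m]}) d :
  (forall k, deg_le (P k) d) -> deg_le (\sum_k a k *: P k) d.
Proof.
move=> P_d; rewrite /deg_le; elim/big_ind: _ => [|p q|k _].
- by rewrite msize0.
- by move=> hp hq; rewrite (leq_trans (msizeD_le _ _)) // geq_max hp hq.
- exact: leq_trans (msizeZ_le _ _) (P_d k).
Qed.

Lemma mform_stacked_bmon (K : fieldType) (m Delta N : nat) (alpha : 'I_N -> 'X_{1..m})
    (y : 'X_{1..m} -> K) (R : Mon m Delta -> 'I_N -> K) j k :
  (mdeg (alpha k) < Delta.+1)%N ->
  mform (fun g => stacked alpha (moment_mx alpha y) R g j) (bmon K alpha k)
  = moment_mx alpha y k j.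
Proof.
move=> lt_k; rewrite /bmon (mformX _ lt_k) /stacked /=.
(* [stacked] may pick another k' with alpha k' = alpha k; the moment matrix
   cannot tell k and k' apart. *)
case: pickP => [k' /eqP alpha_k' | /(_ k)]; last by rewrite eqxx.
by rewrite !mxE alpha_k'.
Qed.

Theorem theorem3p3
  (K : closedFieldType) (m s : nat) (f : 'I_s -> {mpoly K[m]})
  (N D Delta : nat) (alpha : 'I_N -> 'X_{1..m})
  (Hdeg : forall i, (mdeg (alpha i) <= D)%N)
  (HbasisA : basis_quotient f (bmon K alpha))
  (HDelta : (2 * D <= Delta)%N)
  (HbasisT : basis_trunc_quotient f Delta (bmon K alpha))
  (r : nat) (Mac : 'I_r -> Mon m Delta -> K)
  (HMac_in : forall k, in_L f Delta (row_poly (Mac k)))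
  (HMac_free : forall a : 'I_r -> K,
      \sum_(k < r) a k *: row_poly (Mac k) = 0 -> forall k, a k = 0)
  (HMac_span : forall p, in_L f Delta p ->
      exists a : 'I_r -> K, p = \sum_(k < r) a k *: row_poly (Mac k))
  (y : 'X_{1..m} -> K)
  (Hy : forall k, \sum_(g : Mon m Delta) Mac k g * y (g : 'X_{1..m}) = 0)
  (HMB : moment_mx alpha y \in unitmx)
  (R : Mon m Delta -> 'I_N -> K)
  (HR : forall k j,
      \sum_(g : Mon m Delta) Mac k g * stacked alpha (moment_mx alpha y) R g j = 0)
  (cJ : 'I_N -> K)
  (HJ : in_ideal f (\sum_(k < N) cJ k *: bmon K alpha k
                    - \sum_(i < N) bmon K alpha i * bstar alpha (moment_mx alpha y) i)) :
  forall (i j : 'I_N) (T : 'M[K]_N),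
    mult_matrix f (bmon K alpha) (bmon K alpha i * bmon K alpha j) T ->
    syl_stacked alpha (\sum_(k < N) cJ k *: bmon K alpha k)
                (moment_mx alpha y) R i j = \tr T.
Proof.
move=> i j T HT.
set b := bmon K alpha; set M := moment_mx alpha y; set J := \sum_(k < N) _.
pose form := aform HbasisA (fun k => y (alpha k)).
pose my := mform (fun g : Mon m Delta => y (g : 'X_{1..m})).
pose mcol := mform (fun g => stacked alpha M R g j).
have D_Delta : (D <= Delta)%N by rewrite (leq_trans _ HDelta) // leq_pmull.
have lt_b k : (mdeg (alpha k) < Delta.+1)%N by rewrite ltnS (leq_trans (Hdeg k)).
have deg_bb k l : (mdeg (alpha k + alpha l)%MM <= Delta)%N.
  by rewrite mdegD (leq_trans _ HDelta) // mul2n -addnn leq_add.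
have bM k l : b k * b l = 'X_[alpha k + alpha l] by rewrite mpolyXD.
have my_form p : deg_le p Delta -> my p = form p.
  rewrite -[p in form p]mulr1; apply: (mform_aformM HMac_span HbasisT Hy) => k.
  by rewrite mulr1 aform_basis /my /b /bmon (mformX _ (lt_b k)).
have M_form k l : M k l = form (b k * b l).
  by rewrite -my_form bM ?deg_leX // /my (mformX _ (deg_bb k l)) mxE.
have mcol_form p : deg_le p Delta -> mcol p = form (p * b j).
  apply: (mform_aformM HMac_span HbasisT (HR^~ j)) => k.
  by rewrite mform_stacked_bmon ?M_form.
have deg_biJ : deg_le (b i * J) Delta.
  rewrite /J mulr_sumr; under eq_bigr do rewrite -scalerAr.
  by apply: deg_le_lincomb => k; rewrite bM deg_leX.
have MV : \matrix_(k, l) form (b k * b l) *m invmx M = 1%:M.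
  suff -> : \matrix_(k, l) form (b k * b l) = M by rewrite mulmxV.
  by apply/matrixP => k l; rewrite mxE M_form.
rewrite -[syl_stacked _ _ _ _ _ _]/(mcol (b i * J)) mcol_form //.
rewrite (trace_mult_matrix MV HT) mulrAC; apply: aform_eq_mod.
by rewrite -mulrBr; apply: idealMl.
Qed.
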